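(* Let $(N,v)$ be a cooperative game given by nonnegative integers $k,w_1,\ldots,w_{|N|}$ with $v(S)=\max_{S'\subseteq S:\ |S'|\le k}\sum_{j\in S'}w_j$ (the sum of the $k$ largest weights in $S$). Then the Shapley value of any given agent can be computed in time $O(|N|^3)$.
   Context: The Shapley value of agent $i$ in a cooperative game $(N,v)$ is $\phi_i(v)=\sum_{S\subseteq N\setminus\{i\}}\frac{|S|!\,(|N|-|S|-1)!}{|N|!}\big(v(S\cup\{i\})-v(S)\big)$. Running times count arithmetic operations at unit cost. *)

From HB Require Import structures.
From mathcomp Require Import all_boot all_order all_algebra.
Set Implicit Arguments. Unset Strict Implicit. Unset Printing Implicit Defensive.
Import Order.TTheory GRing.Theory Num.Theory.
Local Open Scope ring_scope.

Definition shapley (n : nat) (v : {set 'I_n} -> rat) (i : 'I_n) : rat :=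
  \sum_(S : {set 'I_n} | i \notin S)
     ((#|S|`! * (n - #|S| - 1)`!)%:R / (n`!)%:R) * (v (i |: S) - v S).

Definition topk_game (n k : nat) (w : 'I_n -> nat) (S : {set 'I_n}) : nat :=
  \max_(S' : {set 'I_n} | (S' \subset S) && (#|S'| <= k)%N) \sum_(j in S') w j.

(* Programs are structured
   (while-)programs; every executed atomic instruction and every evaluated test
   costs one unit, so arithmetic operations (+,-,*,/) and comparisons are unit cost. *)
Definition memory := rat -> rat.

Inductive operand :=
| Const of rat
| Dir of rat
| Ind of rat.

Inductive dest :=
| DDir of rat
| DInd of rat.

Inductive binop := Add | Sub | Mul | Div.
Inductive test := TLe | TLt | TEq.

Inductive cmd :=
| Move of dest & operand
| Arith of binop & dest & operand & operand
| Seq of cmd & cmd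
| IfT of test & operand & operand & cmd & cmd
| WhileT of test & operand & operand & cmd.

Definition upd (m : memory) (a x : rat) : memory := fun b => if b == a then x else m b.

Definition eval_opnd (m : memory) (o : operand) : rat :=
  match o with Const q => q | Dir a => m a | Ind a => m (m a) end.

Definition addr (m : memory) (d : dest) : rat :=
  match d with DDir a => a | DInd a => m a end.

Definition eval_binop (o : binop) (x y : rat) : rat :=
  match o with Add => x + y | Sub => x - y | Mul => x * y | Div => x / y end.

Definition eval_test (t : test) (x y : rat) : bool :=
  match t with TLe => x <= y | TLt => x < y | TEq => x == y end.

Inductive exec : memory -> cmd -> nat -> memory -> Prop :=
| EMove m d x :
    exec m (Move d x) 1 (upd m (addr m d) (eval_opnd m x))
| EArith m o d x y :
    exec m (Arith o d x y) 1
      (upd m (addr m d) (eval_binop o (eval_opnd m x) (eval_opnd m y)))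
| ESeq m1 m2 m3 c1 c2 t1 t2 :
    exec m1 c1 t1 m2 -> exec m2 c2 t2 m3 -> exec m1 (Seq c1 c2) (t1 + t2) m3
| EIfTrue m m' tt x y c1 c2 t :
    eval_test tt (eval_opnd m x) (eval_opnd m y) = true ->
    exec m c1 t m' -> exec m (IfT tt x y c1 c2) t.+1 m'
| EIfFalse m m' tt x y c1 c2 t :
    eval_test tt (eval_opnd m x) (eval_opnd m y) = false ->
    exec m c2 t m' -> exec m (IfT tt x y c1 c2) t.+1 m'
| EWhileFalse m tt x y c :
    eval_test tt (eval_opnd m x) (eval_opnd m y) = false ->
    exec m (WhileT tt x y c) 1 m
| EWhileTrue m m1 m2 tt x y c t1 t2 :
    eval_test tt (eval_opnd m x) (eval_opnd m y) = true ->
    exec m c t1 m1 -> exec m1 (WhileT tt x y c) t2 m2 ->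
    exec m (WhileT tt x y c) (t1 + t2).+1 m2.

(* Input encoding: M[0] = n, M[1] = k, M[2] = i (0-based agent index),
   M[3+j] = w_j for j < n, all other cells 0. Output: M[0] at halting. *)
Definition init_mem (n k : nat) (w : 'I_n -> nat) (i : 'I_n) : memory :=
  fun a => if a == 0 then n%:R
           else if a == 1 then k%:R
           else if a == 2 then (i : nat)%:R
           else \sum_(j < n | a == (3 + j)%:R) (w j)%:R.

(* Write the weight w_j as the number of thresholds t < w_j and let A_t = {j | t < w_j}.
   The sum of the k largest weights of S is then sum_t min(k, |S ∩ A_t|), so adding i to S
   gains one unit for every t < w_i at which S meets A_t in fewer than k players.  Hence
   phi_i = sum_{t < w_i} H(|A_t|), where H(a) only depends on n, k and a and is a double sum
   of O(n^2) factorial expressions.  Since |A_t| >= m exactly when t is below the m-th largest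
   weight u_m, Abel summation turns the sum over thresholds (whose number is unbounded in n)
   into sum_{m < n} (H(m+1) - H(m)) min(w_i, u_m), which a RAM evaluates in O(n^3) steps
   using a table of factorials. *)

From Pilot Require Import Defs.
From mathcomp Require Import all_boot all_order all_algebra.
From mathcomp Require Import zify ring lra.
Set Implicit Arguments. Unset Strict Implicit. Unset Printing Implicit Defensive.
Import Order.TTheory GRing.Theory Num.Theory.
Local Open Scope ring_scope.

(** * Layer decomposition of the top-k game *)

Lemma sum_ord_ltn W x : (\sum_(t < W) (t < x)%N = minn W x)%N.
Proof.
elim: W => [|W IH]; first by rewrite big_ord0 min0n.
by rewrite big_ord_recr /= IH; case: ltnP => /=; lia.
Qed.

Lemma sum_ord_ltn_id W x : (x <= W)%N -> (\sum_(t < W) (t < x)%N)%N = x.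
Proof. by move=> hx; rewrite sum_ord_ltn; apply/minn_idPr. Qed.

Lemma sum_nat_in_card (T : finType) (S : {set T}) (P : pred T) :
  (\sum_(j in S) (P j : nat) = #|S :&: [set j | P j]|)%N.
Proof. by rewrite -big_mkcondr sum1_card; apply: eq_card => j; rewrite !inE. Qed.

Section LayerCake.

Variables (n : nat) (w : 'I_n -> nat).

Definition level_set (t : nat) : {set 'I_n} := [set j | (t < w j)%N].

Definition layer_sum k W (S : {set 'I_n}) : nat :=
  \sum_(t < W) minn k #|S :&: level_set t|.

Variable W : nat.
Hypothesis leq_w_W : forall j, (w j <= W)%N.

Lemma sum_weights_layers (S : {set 'I_n}) :
  (\sum_(j in S) w j = \sum_(t < W) #|S :&: level_set t|)%N.
Proof.
under eq_bigr => j _ do rewrite -(sum_ord_ltn_id (leq_w_W j)).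
by rewrite exchange_big; apply: eq_bigr => t _; rewrite sum_nat_in_card.
Qed.

Lemma topk_game_le_layer_sum k S : (topk_game k w S <= layer_sum k W S)%N.
Proof.
apply/bigmax_leqP => S' /andP [sub ck]; rewrite sum_weights_layers.
apply: leq_sum => t _; rewrite leq_min; apply/andP; split.
  exact: leq_trans (subset_leq_card (subsetIl _ _)) ck.
exact/subset_leq_card/setSI.
Qed.

(* Greedy choice: the heaviest player of S is counted in every layer it reaches. *)
Lemma layer_sum_attained k (S : {set 'I_n}) : exists2 S' : {set 'I_n},
  (S' \subset S) && (#|S'| <= k)%N & (layer_sum k W S <= \sum_(j in S') w j)%N.
Proof.
elim: k S => [|k IH] S.
  by exists set0; rewrite ?sub0set ?cards0 // /layer_sum big1 // => t _; rewrite min0n.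
have [->|[j0 j0S]] := set_0Vmem S.
  by exists set0; rewrite ?sub0set ?cards0 // /layer_sum big1 // => t _; rewrite set0I cards0 minn0.
case: (arg_maxnP w j0S) => j jS jmax.
have [S'' /andP [sub ck] hl] := IH (S :\ j).
have jS'' : j \notin S'' by apply: contraTN isT => /(subsetP sub); rewrite !inE eqxx.
exists (j |: S'').
  rewrite cardsU1 jS'' add1n ltnS ck andbT; apply/subsetP => x.
  by rewrite !inE => /predU1P [-> //|/(subsetP sub)]; rewrite !inE => /andP [].
rewrite big_setU1 //= -(sum_ord_ltn_id (leq_w_W j)).
apply: leq_trans (leq_add (leqnn _) hl); rewrite /layer_sum -big_split /=.
apply: leq_sum => t _; case: (ltnP t (w j)) => htj /=.
  have -> : S :&: level_set t = j |: ((S :\ j) :&: level_set t).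
    apply/setP => x; rewrite !inE; case: (eqVneq x j) => [->|] //=.
    by rewrite htj andbT; exact: jS.
  rewrite cardsU1 !inE eqxx /=; lia.
have -> : S :&: level_set t = set0.
  apply/setP => x; rewrite !inE; apply/negbTE/nandP.
  by case xS: (x \in S); [right; rewrite -leqNgt (leq_trans (jmax x xS))|left].
by rewrite cards0 minn0.
Qed.

Lemma topk_game_layer_sum k S : topk_game k w S = layer_sum k W S.
Proof.
apply/eqP; rewrite eqn_leq topk_game_le_layer_sum /=.
have [S' S'P hl] := layer_sum_attained k S.
apply: leq_trans hl _; rewrite /topk_game.
exact: (leq_bigmax_cond (F := fun S' : {set 'I_n} => \sum_(j in S') w j) S' S'P).
Qed.

Lemma layer_sum_setU1 k (S : {set 'I_n}) (i : 'I_n) : i \notin S ->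
  layer_sum k W (i |: S) =
    (layer_sum k W S + \sum_(t < w i) (#|S :&: level_set t| < k)%N)%N.
Proof.
move=> iS; rewrite /layer_sum.
rewrite (big_ord_widen W (fun t => (#|S :&: level_set t| < k)%N : nat) (leq_w_W i)).
rewrite [X in (_ + X)%N]big_mkcond -big_split /=; apply: eq_bigr => t _.
have -> : (i |: S) :&: level_set t =
          if (t < w i)%N then i |: (S :&: level_set t) else S :&: level_set t.
  apply/setP => x; case: ifP => h; rewrite !inE;
    case: (eqVneq x i) => [->|] //=; by rewrite h ?andbF.
case: ifP => _; last by rewrite addn0.
rewrite cardsU1 !inE (negbTE iS) /=; case: ltnP => /=; lia.
Qed.

End LayerCake.

Definition max_weight n (w : 'I_n -> nat) : nat := \max_j w j.

Lemma leq_max_weight n (w : 'I_n -> nat) j : (w j <= max_weight w)%N.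
Proof. exact: (leq_bigmax (F := w) j). Qed.

Lemma topk_game_marginal n k (w : 'I_n -> nat) (S : {set 'I_n}) (i : 'I_n) :
  i \notin S ->
  (topk_game k w (i |: S))%:R - (topk_game k w S)%:R =
  (\sum_(t < w i) (#|S :&: level_set w t| < k)%N)%N%:R :> rat.
Proof.
move=> iS; rewrite !(topk_game_layer_sum (@leq_max_weight n w)).
by rewrite (layer_sum_setU1 (@leq_max_weight n w)) // natrD addrAC subrr add0r.
Qed.

(** * The Shapley value as a sum over layers *)

Definition factr (j : nat) : rat := j`!%:R.

Definition shapley_coef (n s : nat) : rat := (s`! * (n - s - 1)`!)%:R / n`!%:R.

(* [C(a-1,x) C(n-a,y) (x+y)! (n-x-y-1)! / n!]: the Shapley coefficients of all coalitions
   avoiding i with x players in a set of size a containing i and y players outside it. *)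
Definition layer_term (n a x y : nat) : rat :=
  factr (a - 1) / factr x / factr (a - 1 - x) * factr (n - a) / factr y / factr (n - a - y)
  * factr (x + y) * factr (n - (x + y) - 1) / factr n.

Definition layer_weight (n k a : nat) : rat :=
  \sum_(x < a) (if (x < k)%N then \sum_(y < n - a + 1) layer_term n a x y else 0).

Lemma factr_neq0 j : factr j != 0.
Proof. by rewrite pnatr_eq0 -lt0n fact_gt0. Qed.

Lemma binr_fact p q : (q <= p)%N -> 'C(p, q)%:R = factr p / factr q / factr (p - q).
Proof.
move=> hqp; rewrite -[factr p](congr1 (fun x => x%:R : rat) (bin_fact hqp)) !natrM.
by field; rewrite !factr_neq0.
Qed.

Lemma sum_subset_card (T : finType) (B : {set T}) (G : nat -> rat) :
  \sum_(X : {set T} | X \subset B) G #|X| = \sum_(x < #|B|.+1) 'C(#|B|, x)%:R * G x.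
Proof.
transitivity (\sum_(X : {set T} | X \subset B) \sum_(x < #|B|.+1) (#|X| == x)%:R * G x).
  apply: eq_bigr => X sub; have hX : (#|X| < #|B|.+1)%N by rewrite ltnS subset_leq_card.
  rewrite (bigD1 (Ordinal hX)) //= eqxx mul1r big1 ?addr0 // => x hx.
  by rewrite (_ : (#|X| == x) = false) ?mul0r //; apply: contraNF hx => /eqP e; apply/eqP/val_inj.
rewrite exchange_big; apply: eq_bigr => x _; rewrite -mulr_suml -cards_draws -natr_sum.
by rewrite -big_mkcondr sum1_card; congr (_%:R * _); apply: eq_card => X; rewrite !inE.
Qed.

Section SplitCoalitions.

Variables (T : finType) (B : {set T}) (i : T).
Hypothesis iB : i \in B.

Let inside (X Y : {set T}) := (X \subset B :\ i) && (Y \subset ~: B).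

Lemma setUI_inside X Y : inside X Y -> (X :|: Y) :&: B = X.
Proof.
case/andP => hX hY; apply/setP => x; rewrite !inE.
case xX: (x \in X); first by have := subsetP hX x xX; rewrite !inE => /andP [_ ->].
by case xY: (x \in Y) => //=; have := subsetP hY x xY; rewrite !inE => /negbTE ->.
Qed.

Lemma setUIC_inside X Y : inside X Y -> (X :|: Y) :&: ~: B = Y.
Proof.
case/andP => hX hY; apply/setP => x; rewrite !inE.
case xY: (x \in Y); first by have := subsetP hY x xY; rewrite !inE => ->; rewrite orbT.
by case xX: (x \in X) => //=; have := subsetP hX x xX; rewrite !inE => /andP [_ ->].
Qed.

Lemma sum_notin_split (F : {set T} -> rat) :
  \sum_(S : {set T} | i \notin S) F S =
  \sum_(X : {set T} | X \subset B :\ i) \sum_(Y : {set T} | Y \subset ~: B) F (X :|: Y).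
Proof.
rewrite pair_big /=.
have inj : {in [pred p | inside p.1 p.2] &, injective (fun p => p.1 :|: p.2)}.
  move=> [X Y] [X' Y'] /= hXY hXY' e; have := setUI_inside hXY; have := setUIC_inside hXY.
  by rewrite e setUI_inside ?setUIC_inside // => -> ->.
rewrite -(big_imset _ inj) /=; apply: eq_bigl => S; apply/idP/imsetP.
  move=> iS; exists (S :&: (B :\ i), S :&: ~: B); first by rewrite inE /inside !subsetIr.
  apply/setP => x; rewrite !inE; case xS: (x \in S) => //=.
  by case: (eqVneq x i) => [e|] /=; [move: iS; rewrite -e xS | case: (x \in B)].
move=> [[X Y]] /andP [/= hX hY] ->; rewrite !inE negb_or.
apply/andP; split; apply/negP.
  by move/(subsetP hX); rewrite !inE eqxx.
by move/(subsetP hY); rewrite !inE iB.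
Qed.

End SplitCoalitions.

Lemma sum_shapley_coef_card_lt n k (i : 'I_n) (B : {set 'I_n}) : i \in B ->
  \sum_(S : {set 'I_n} | i \notin S) shapley_coef n #|S| * (#|S :&: B| < k)%N%:R
  = layer_weight n k #|B|.
Proof.
move=> iB; rewrite (sum_notin_split iB).
transitivity (\sum_(X : {set 'I_n} | X \subset B :\ i)
   \sum_(Y : {set 'I_n} | Y \subset ~: B) shapley_coef n (#|X| + #|Y|) * (#|X| < k)%N%:R).
  apply: eq_bigr => X hX; apply: eq_bigr => Y hY.
  have hXY : (X \subset B :\ i) && (Y \subset ~: B) by rewrite hX.
  have dis : [disjoint X & Y].
    rewrite disjoint_sym disjoints_subset (subset_trans hY) // setCS.
    exact: subset_trans hX (subD1set B i).
  by rewrite cardsU (disjoint_setI0 dis) cards0 subn0 (setUI_inside hXY).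
under eq_bigr do rewrite (sum_subset_card _ (fun y => shapley_coef n (#|_| + y) * _)).
rewrite (sum_subset_card _ (fun x => \sum_(y < #|~: B|.+1)
           'C(#|~: B|, y)%:R * (shapley_coef n (x + y) * (x < k)%N%:R))).
have a1 : (0 < #|B|)%N by apply/card_gt0P; exists i.
have -> : #|B :\ i| = #|B|.-1 by rewrite (cardsD1 i B) iB.
have -> : #|~: B| = (n - #|B|)%N by rewrite cardsCs setCK card_ord.
rewrite /layer_weight prednK //; apply: eq_bigr => x _.
case: ifP => hk; last by rewrite big1 ?mulr0 // => y _; rewrite !mulr0.
rewrite addn1 mulr_sumr; apply: eq_bigr => y _.
have hx : (x <= #|B|.-1)%N by rewrite -ltnS prednK.
have hy : (y <= n - #|B|)%N by rewrite -ltnS.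
rewrite !binr_fact // /layer_term /shapley_coef natrM -!subn1 mulr1 /factr.
ring.
Qed.

Lemma shapley_topk_level_sets n k (w : 'I_n -> nat) (i : 'I_n) :
  shapley (fun S => (topk_game k w S)%:R) i = \sum_(t < w i) layer_weight n k #|level_set w t|.
Proof.
transitivity (\sum_(S : {set 'I_n} | i \notin S)
   \sum_(t < w i) shapley_coef n #|S| * (#|S :&: level_set w t| < k)%N%:R).
  by apply: eq_bigr => S iS; rewrite topk_game_marginal // natr_sum mulr_sumr.
rewrite exchange_big; apply: eq_bigr => t _.
by apply: sum_shapley_coef_card_lt; rewrite inE.
Qed.

(** * Abel summation over the sorted weights *)

Definition rank_count n (w : 'I_n -> nat) (j : 'I_n) : nat := #|[set l | (w j <= w l)%N]|.

(* The [m]-th largest weight (0 when [m > n]). *)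
Definition kth_largest n (w : 'I_n -> nat) (m : nat) : nat :=
  \max_(j | (m <= rank_count w j)%N) w j.

Definition shapley_topk_formula n k (w : 'I_n -> nat) (i : 'I_n) : rat :=
  \sum_(m < n) (layer_weight n k m.+1 - layer_weight n k m) * (minn (w i) (kth_largest w m.+1))%:R.

Lemma leq_card_level_set n (w : 'I_n -> nat) (i : 'I_n) t m : (t < w i)%N ->
  (m <= #|level_set w t|)%N = (t < kth_largest w m)%N.
Proof.
move=> ti; apply/idP/idP => h.
  case: (arg_minnP w (P := fun j => (t < w j)%N) ti) => j tj jmin.
  apply: leq_trans tj (leq_bigmax_cond (F := w) j _).
  apply: leq_trans h (subset_leq_card _); apply/subsetP => l; rewrite !inE; exact: jmin.
case: (boolP [exists j, (m <= rank_count w j)%N && (t < w j)%N]).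
  case/existsP => j /andP [hj tj]; apply: leq_trans hj (subset_leq_card _).
  by apply/subsetP => l; rewrite !inE => hl; exact: leq_trans tj hl.
move=> /existsPn hn; move: h; rewrite ltnNge => /negP; case.
by apply/bigmax_leqP => j hj; have := hn j; rewrite hj /= -leqNgt.
Qed.

(* Abel summation: [layer_weight n k a] telescopes over [m < a], and [m < #|level_set t|]
   holds for exactly [minn (w i) (kth_largest w m.+1)] layers [t < w i]. *)
Lemma sum_layer_weight_level_sets n k (w : 'I_n -> nat) (i : 'I_n) :
  \sum_(t < w i) layer_weight n k #|level_set w t| = shapley_topk_formula k w i.
Proof.
transitivity (\sum_(t < w i) \sum_(m < n) (m < #|level_set w t|)%N%:R *
                 (layer_weight n k m.+1 - layer_weight n k m)).
  apply: eq_bigr => t _.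
  have an : (#|level_set w t| <= n)%N by rewrite -[n in (_ <= n)%N]card_ord max_card.
  have lw0 : layer_weight n k 0 = 0 by rewrite /layer_weight big_ord0.
  rewrite -[LHS]subr0 -[X in _ - X]lw0 -telescope_sumr // big_mkord.
  rewrite (big_ord_widen n (fun m => layer_weight n k m.+1 - layer_weight n k m) an).
  by rewrite big_mkcond; apply: eq_bigr => m _; case: ifP; rewrite ?mul1r ?mul0r.
rewrite exchange_big; apply: eq_bigr => m _.
rewrite -mulr_suml mulrC -sum_ord_ltn natr_sum; congr (_ * _).
by apply: eq_bigr => t _; rewrite (leq_card_level_set m.+1 (ltn_ord t)).
Qed.

Theorem shapley_topk_formulaE n k (w : 'I_n -> nat) (i : 'I_n) :
  shapley (fun S => (topk_game k w S)%:R) i = shapley_topk_formula k w i.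
Proof. by rewrite shapley_topk_level_sets sum_layer_weight_level_sets. Qed.

(** * Running programs within a step budget *)

Definition run (m : memory) (c : cmd) (Q : memory -> Prop) (T : nat) : Prop :=
  exists t m', [/\ exec m c t m', (t <= T)%N & Q m'].

Lemma run_mono m c Q T T' : (T <= T')%N -> run m c Q T -> run m c Q T'.
Proof. by move=> h [t [m' [e ht q]]]; exists t, m'; split => //; exact: leq_trans h. Qed.

Lemma run_weaken m c (Q Q' : memory -> Prop) T :
  (forall m, Q m -> Q' m) -> run m c Q T -> run m c Q' T.
Proof. by move=> h [t [m' [e ht q]]]; exists t, m'; split => //; exact: h. Qed.

Lemma run_seq m c1 c2 Q T1 T2 :
  run m c1 (fun m1 => run m1 c2 Q T2) T1 -> run m (Seq c1 c2) Q (T1 + T2).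
Proof.
move=> [t1 [m1 [e1 h1 [t2 [m2 [e2 h2 q]]]]]].
by exists (t1 + t2)%N, m2; split; [exact: ESeq e1 e2 | exact: leq_add |].
Qed.

Lemma run_arith_end m o d x y (Q : memory -> Prop) T :
  Q (upd m (addr m d) (eval_binop o (eval_opnd m x) (eval_opnd m y))) ->
  run m (Arith o d x y) Q T.+1.
Proof. by move=> h; exists 1%N; eexists; split; [exact: EArith | | exact: h]. Qed.

Lemma run_move_end m d x (Q : memory -> Prop) T :
  Q (upd m (addr m d) (eval_opnd m x)) -> run m (Move d x) Q T.+1.
Proof. by move=> h; exists 1%N; eexists; split; [exact: EMove | | exact: h]. Qed.

Lemma run_arith m o d x y c Q T :
  run (upd m (addr m d) (eval_binop o (eval_opnd m x) (eval_opnd m y))) c Q T ->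
  run m (Seq (Arith o d x y) c) Q T.+1.
Proof. by move=> h; rewrite -add1n; apply/run_seq/run_arith_end. Qed.

Lemma run_move m d x c Q T :
  run (upd m (addr m d) (eval_opnd m x)) c Q T -> run m (Seq (Move d x) c) Q T.+1.
Proof. by move=> h; rewrite -add1n; apply/run_seq/run_move_end. Qed.

Lemma run_if m tt x y c1 c2 Q T :
  (eval_test tt (eval_opnd m x) (eval_opnd m y) -> run m c1 Q T) ->
  (~~ eval_test tt (eval_opnd m x) (eval_opnd m y) -> run m c2 Q T) ->
  run m (IfT tt x y c1 c2) Q T.+1.
Proof.
case e: (eval_test _ _ _) => h1 h2.
  by have [t [m' [ex ht q]]] := h1 isT; exists t.+1, m'; split => //; exact: EIfTrue.
by have [t [m' [ex ht q]]] := h2 isT; exists t.+1, m'; split => //; exact: EIfFalse.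
Qed.

Lemma run_while m tt x y c (I : nat -> memory -> Prop) N Tb (Q : memory -> Prop) :
  I 0%N m ->
  (forall j m, (j < N)%N -> I j m ->
      eval_test tt (eval_opnd m x) (eval_opnd m y) /\ run m c (I j.+1) Tb) ->
  (forall m, I N m -> eval_test tt (eval_opnd m x) (eval_opnd m y) = false /\ Q m) ->
  run m (WhileT tt x y c) Q (N * Tb.+1).+1.
Proof.
move=> h0 hs hN.
suff: forall d j m, (j + d = N)%N -> I j m -> run m (WhileT tt x y c) Q (d * Tb.+1).+1.
  by move=> /(_ N 0%N m); rewrite add0n; apply.
elim=> [|d IH] j m1 hj hI.
  rewrite addn0 in hj; subst j; have [hf q] := hN m1 hI.
  by exists 1%N, m1; split => //; exact: EWhileFalse.
have ltj : (j < N)%N by rewrite -hj addnS ltnS leq_addr.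
have [ht [t1 [m2 [e1 h1 q1]]]] := hs j m1 ltj hI.
have [t2 [m3 [e2 h2 q2]]] := IH j.+1 m2 (etrans (addSnnS j d) hj) q1.
exists (t1 + t2).+1, m3; split => //; first exact: EWhileTrue e1 e2.
by rewrite mulSn; lia.
Qed.

(** * Memory layout and symbolic execution *)

Lemma upd_same m a v : upd m a v a = v.
Proof. by rewrite /upd eqxx. Qed.

Lemma upd_other m a b v : b != a -> upd m a v b = m b.
Proof. by rewrite /upd => /negbTE ->. Qed.

(* Registers live at addresses -1, ..., -29 and the factorial table from -30
   downwards; the input occupies nonnegative addresses. *)
Definition reg (r : nat) : rat := - r.+1%:R.
Notation fact_addr j := (-30 - (j)%:R : rat).

Lemma reg_lt0 r : reg r < 0.
Proof. by rewrite oppr_lt0 ltr0Sn. Qed.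

Lemma eq_reg s r : (reg s == reg r) = (s == r).
Proof. by rewrite eqr_opp eqr_nat. Qed.

Lemma reg_gt s : (s < 29)%N -> -30 < reg s.
Proof.
move=> hs; have : s.+1%:R < 30 :> rat by rewrite ltr_nat; lia.
by rewrite /reg; lra.
Qed.

Lemma fact_addr_le j : fact_addr j <= -30.
Proof. by rewrite lerBlDr lerDl ler0n. Qed.

Lemma fact_addr_lt_reg j r : (r < 29)%N -> fact_addr j < reg r.
Proof. by move=> hr; apply: le_lt_trans (fact_addr_le j) (reg_gt hr). Qed.

(* Keeps unification from unfolding register addresses into rational arithmetic. *)
Opaque reg.

Record input_loaded n k (w : 'I_n -> nat) (i : 'I_n) (m : memory) : Prop := InputLoaded {
  input_n : m 0 = n%:R;
  input_k : m 1 = k%:R;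
  input_i : m 2 = (i : nat)%:R;
  input_w : forall l : 'I_n, m ((l : nat)%:R + 3) = (w l)%:R }.

Definition fact_table (m : memory) F := forall j, (j < F)%N -> m (fact_addr j) = j`!%:R.

Lemma input_loaded_init n k (w : 'I_n -> nat) (i : 'I_n) : input_loaded k w i (init_mem k w i).
Proof.
have n3 (l : nat) a : a < 3 -> (l%:R + 3 == a :> rat) = false.
  by move=> ha; apply/negbTE; rewrite gt_eqF // (lt_le_trans ha) // lerDr.
split; rewrite /init_mem ?eqxx ?oner_eq0 //.
move=> l; rewrite !n3 //; try lra.
rewrite (bigD1 l) /=; last by rewrite -natrD addnC.
rewrite big1 ?addr0 // => j /andP [hj hne]; exfalso; move: hj hne.
by rewrite -natrD eqr_nat addnC eqn_add2l => /eqP/val_inj ->; rewrite eqxx.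
Qed.

Lemma input_loaded_upd n k w i m a v : a < 0 ->
  @input_loaded n k w i m -> input_loaded k w i (upd m a v).
Proof.
move=> ha.
have far b : 0 <= b -> b != a by move=> hb; rewrite gt_eqF // (lt_le_trans ha).
move=> [h0 h1 h2 h3]; split; rewrite ?upd_other ?far //; try lra.
by move=> l; rewrite upd_other ?h3 // far // addr_ge0 ?ler0n.
Qed.

Lemma input_w_nat n k w i m l (hl : (l < n)%N) : @input_loaded n k w i m ->
  m (l%:R + 3) = (w (Ordinal hl))%:R.
Proof. by move=> h; rewrite -(input_w h). Qed.

Lemma fact_table_upd_reg m r v F : (r < 29)%N -> fact_table m F -> fact_table (upd m (reg r) v) F.
Proof. by move=> hr h j hj; rewrite upd_other ?lt_eqF ?fact_addr_lt_reg ?h. Qed.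

Lemma fact_table_extend m F : fact_table m F -> fact_table (upd m (fact_addr F) F`!%:R) F.+1.
Proof.
move=> h j; rewrite ltnS leq_eqVlt => /predU1P [->|hj]; first by rewrite upd_same.
by rewrite upd_other ?h // (inj_eq (subrI _)) eqr_nat neq_ltn hj.
Qed.

Lemma m30_lt0 : -30 < 0 :> rat.
Proof. by rewrite oppr_lt0. Qed.

Lemma reg_upd_low m a s v : a <= -30 -> (s < 29)%N -> upd m a v (reg s) = m (reg s).
Proof.
by move=> ha hs; apply/upd_other/negbT/gt_eqF/(le_lt_trans ha)/reg_gt.
Qed.

Lemma reg_upd_other m r s v : (s == r) = false -> upd m (reg r) v (reg s) = m (reg s).
Proof. by move=> h; rewrite upd_other // eq_reg h. Qed.

Definition reg_frame (ws : seq nat) (m0 m : memory) :=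
  forall s, (s < 29)%N -> s \notin ws -> m (reg s) = m0 (reg s).

Lemma reg_frame_upd ws m0 m r v :
  r \in ws -> reg_frame ws m0 m -> reg_frame ws m0 (upd m (reg r) v).
Proof.
move=> hr h s hs hsw; rewrite reg_upd_other ?h //.
by apply: contraNF hsw => /eqP ->.
Qed.

Lemma reg_frame_upd_low ws m0 m a v : a <= -30 -> reg_frame ws m0 m -> reg_frame ws m0 (upd m a v).
Proof. by move=> ha h s hs hsw; rewrite reg_upd_low ?h. Qed.

Lemma reg_frame_trans ws m0 m1 m2 : reg_frame ws m0 m1 -> reg_frame ws m1 m2 -> reg_frame ws m0 m2.
Proof. by move=> h1 h2 s hs hsw; rewrite h2 ?h1. Qed.

Lemma reg_frame_trans_sub ws ws1 m0 m1 m2 : {subset ws1 <= ws} ->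
  reg_frame ws m0 m1 -> reg_frame ws1 m1 m2 -> reg_frame ws m0 m2.
Proof. by move=> sub h1 h2 s hs hsw; rewrite h2 ?h1 //; apply: contra hsw; exact: sub. Qed.

Lemma reg_frame_get ws m0 m s x : reg_frame ws m0 m -> (s < 29)%N -> s \notin ws ->
  m0 (reg s) = x -> m (reg s) = x.
Proof. by move=> h hs hsw <-; exact: h. Qed.

(* Symbolic execution: evaluate operands, read registers, and after a write
   to a register or to the factorial table forward the facts that survive. *)
Ltac eval_instr := cbn [eval_opnd addr eval_binop eval_test].

Ltac read_regs := repeat match goal with H : _ (reg _) = _ |- _ => rewrite H end.

Ltac read_input := match goal with H : input_loaded _ _ _ _ |- _ =>
  rewrite ?(input_n H) ?(input_k H) ?(input_i H) ?(input_w H) end.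

Ltac read_fact := match goal with H : fact_table _ _ |- _ => rewrite H; last by lia end.

Ltac write_reg :=
  lazymatch goal with |- context[upd ?m (reg ?r) ?v] =>
    let m' := fresh "m" in let E := fresh "E" in
    pose proof (upd_same m (reg r) v);
    repeat match goal with
    | H : input_loaded _ _ _ m |- _ => pose proof (input_loaded_upd v (reg_lt0 r) H); clear H
    | H : fact_table m _ |- _ => pose proof (@fact_table_upd_reg m r v _ isT H); clear H
    | H : reg_frame ?ws ?m0 m |- _ => pose proof (@reg_frame_upd ws m0 m r v isT H); clear H
    | H : m (reg ?s) = _ |- _ =>
        first [ rewrite -(@reg_upd_other m r s v (erefl false)) in H | clear H ]
    end;
    remember (upd m (reg r) v) as m' eqn:E; clear E; try clear m
  end.

Ltac write_fact :=
  lazymatch goal with |- run (upd ?m ?a ?v) _ _ _ =>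
    let m' := fresh "m" in let E := fresh "E" in let ha := fresh "ha" in
    assert (ha : a <= -30) by lazymatch a with -30 - _ => exact: fact_addr_le | _ => lra end;
    repeat match goal with
    | H : input_loaded _ _ _ m |- _ =>
        pose proof (input_loaded_upd v (le_lt_trans ha m30_lt0) H); clear H
    | H : m (reg ?s) = _ |- _ => rewrite -(@reg_upd_low m a s v ha isT) in H
    | H : reg_frame _ _ m |- _ => pose proof (reg_frame_upd_low v ha H); clear H
    | H : fact_table m ?F |- _ =>
        first [ pose proof (fact_table_extend H : fact_table (upd m a v) F.+1) | idtac ]; clear H
    end;
    remember (upd m a v) as m' eqn:E; clear E ha; try clear m
  end.

Ltac split_state :=
  repeat match goal with
  | |- _ /\ _ => split
  | |- and3 _ _ _ => split
  | |- ?a = ?a => reflexivity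
  | |- _ => assumption
  end.

Ltac use_frame H :=
  lazymatch type of H with reg_frame ?ws ?m0 ?m =>
    repeat match goal with
    | K : m0 (reg ?s) = ?x |- _ =>
        assert_fails (assert (m (reg s) = x) by assumption);
        pose proof (reg_frame_get H (isT : (s < 29)%N) (isT : s \notin ws) K)
    end
  end.

Ltac step :=
  first [ apply: run_arith | apply: run_move | apply: run_arith_end | apply: run_move_end ];
  eval_instr; read_regs; try read_input.

Ltac commit := try read_fact; first [ write_reg | write_fact ].

Ltac name_memory m0 := lazymatch goal with |- run ?mc _ _ _ => rename mc into m0 end.

Notation rWi := 0%N. Notation rJ := 1%N. Notation rL := 2%N. Notation rCount := 3%N.
Notation rPtr := 4%N. Notation rWj := 5%N. Notation rM := 6%N. Notation rKth := 7%N.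
Notation rMin := 8%N. Notation rLayer := 9%N. Notation rLayerPrev := 10%N. Notation rResult := 11%N.
Notation rX := 12%N. Notation rY := 13%N. Notation rTmp := 14%N. Notation rTmp2 := 15%N.
Notation rNsubM := 16%N. Notation rIdx := 17%N.
Notation ToReg r := (DDir (reg r)).
Notation Reg r := (Dir (reg r)).
Notation skip := (Move (ToReg rTmp) (Const 0)).

Definition state_ok n k (w : 'I_n -> nat) (i : 'I_n) (m : memory) :=
  [/\ input_loaded k w i m, m (reg rWi) = (w i)%:R & fact_table m n.+1].

Ltac destruct_state :=
  repeat match goal with
  | H : state_ok _ _ _ _ |- _ => case: H => ? ? ?
  | H : _ /\ _ |- _ => case: H => ? ?
  end.

Ltac pack_state :=
  lazymatch goal with |- run ?mc _ _ _ =>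
    match goal with H : input_loaded ?k ?w ?i mc |- _ =>
      assert (state_ok k w i mc) by (split; assumption)
    end
  end.

Lemma natr_pred j : j.+1%:R - 1 = j%:R :> rat.
Proof. by rewrite -natr1 addrK. Qed.

Definition load_wi :=
  Seq (Arith Add (ToReg rPtr) (Dir 2) (Const 3)) (Move (ToReg rWi) (Ind (reg rPtr))).

Definition fact_step :=
  Seq (Arith Defs.Sub (ToReg rPtr) (Const (-30)) (Reg rJ))
 (Seq (Arith Defs.Sub (ToReg rIdx) (Reg rJ) (Const 1))
 (Seq (Arith Defs.Sub (ToReg rTmp) (Const (-30)) (Reg rIdx))
 (Seq (Arith Mul (ToReg rTmp2) (Ind (reg rTmp)) (Reg rJ))
 (Seq (Move (DInd (reg rPtr)) (Reg rTmp2))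
      (Arith Add (ToReg rJ) (Reg rJ) (Const 1)))))).

Definition fill_facts :=
  Seq (Move (ToReg rPtr) (Const (-30))) (Seq (Move (DInd (reg rPtr)) (Const 1))
 (Seq (Move (ToReg rJ) (Const 1)) (WhileT TLe (Reg rJ) (Dir 0) fact_step))).

Lemma run_load_wi n k (w : 'I_n -> nat) (i : 'I_n) :
  run (init_mem k w i) load_wi
    (fun m => input_loaded k w i m /\ m (reg rWi) = (w i)%:R) 2.
Proof.
have ? := input_loaded_init k w i.
step; commit.
by step; commit; split.
Qed.

Lemma run_fill_facts n k (w : 'I_n -> nat) (i : 'I_n) m :
  input_loaded k w i m -> m (reg rWi) = (w i)%:R ->
  run m fill_facts (state_ok k w i) (7 * n + 4).
Proof.
move=> ? ?; apply: (@run_mono _ _ _ (3 + (n * 7).+1)); first lia.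
have ? : fact_table m 0 by [].
step; commit.
step; commit.
step; commit.
apply: (run_while (I := fun j m => [/\ input_loaded k w i m, m (reg rWi) = (w i)%:R,
                                      fact_table m j.+1 & m (reg rJ) = j.+1%:R])).
- by split.
- move=> j mj hj [? ? ? ?]; eval_instr; read_regs; read_input; rewrite ler_nat; split => //.
  step; commit.
  step; rewrite natr_pred; commit.
  step; commit.
  step; commit.
  step; rewrite [j`!%:R * _]mulrC -natrM -factS; commit.
  by step; rewrite natr1; commit; split.
- by move=> mj [? ? ? ?]; eval_instr; read_regs; read_input; rewrite ler_nat ltnn.
Qed.

Lemma big_ord_prefixS (R : Type) (idx : R) (op : Monoid.com_law idx) n (F : 'I_n -> R) l
  (hl : (l < n)%N) :
  \big[op/idx]_(j < n | (j < l.+1)%N) F j =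
    op (\big[op/idx]_(j < n | (j < l)%N) F j) (F (Ordinal hl)).
Proof.
rewrite (bigD1 (Ordinal hl)) //= Monoid.mulmC; congr (op _ _); apply: eq_bigl => j.
rewrite ltnS leq_eqVlt -val_eqE /=; case: ltngtP => //= ->; exact: ltnn.
Qed.

Lemma big_ord_prefix_all (R : Type) (idx : R) (op : Monoid.com_law idx) n (F : 'I_n -> R) :
  \big[op/idx]_(j < n | (j < n)%N) F j = \big[op/idx]_(j < n) F j.
Proof. by apply: eq_bigl => j; rewrite ltn_ord. Qed.

Lemma rank_countE n (w : 'I_n -> nat) j : rank_count w j = (\sum_(l < n) (w j <= w l)%N)%N.
Proof. by rewrite /rank_count -sum1dep_card big_mkcond. Qed.

Definition count_step :=
  Seq (Arith Add (ToReg rPtr) (Reg rL) (Const 3))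
 (Seq (IfT TLe (Reg rWj) (Ind (reg rPtr)) (Arith Add (ToReg rCount) (Reg rCount) (Const 1))
         skip)
      (Arith Add (ToReg rL) (Reg rL) (Const 1))).

Definition count_rank :=
  Seq (Move (ToReg rCount) (Const 0)) (Seq (Move (ToReg rL) (Const 0))
 (Seq (Arith Add (ToReg rPtr) (Reg rJ) (Const 3)) (Seq (Move (ToReg rWj) (Ind (reg rPtr)))
      (WhileT TLt (Reg rL) (Dir 0) count_step)))).

Definition count_rank_writes := [:: rCount; rL; rPtr; rWj; rTmp].

Lemma run_count_rank n k (w : 'I_n -> nat) (i : 'I_n) m (j : 'I_n) :
  state_ok k w i m -> m (reg rJ) = (j : nat)%:R ->
  run m count_rank
    (fun m' => [/\ state_ok k w i m', m' (reg rWj) = (w j)%:R,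
                  m' (reg rCount) = (rank_count w j)%:R & reg_frame count_rank_writes m m'])
    (5 * n + 6).
Proof.
move=> ? ?; apply: (@run_mono _ _ _ (4 + (n * (1 + (2 + 1)).+1).+1)); first lia.
destruct_state; have ? : reg_frame count_rank_writes m m by [].
step; commit.
step; commit.
step; commit.
step; commit.
apply: (run_while (I := fun l m' => [/\ state_ok k w i m', m' (reg rWj) = (w j)%:R,
          m' (reg rL) = l%:R, m' (reg rCount) = (\sum_(l' < n | (l' < l)%N) (w j <= w l')%N)%N%:R
          & reg_frame count_rank_writes m m'])).
- by split_state; rewrite big_pred0.
- move=> l ml hl [? ? ? ? ?]; destruct_state.
  eval_instr; read_regs; read_input; rewrite ltr_nat; split => //.
  have hsum := big_ord_prefixS addn (fun l' : 'I_n => (w j <= w l')%N : nat) hl.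
  step; commit.
  apply: run_seq; apply: run_if; eval_instr; read_regs;
    match goal with H : input_loaded _ _ _ _ |- _ => rewrite (input_w_nat hl H) ler_nat end.
  + move=> hle; rewrite hle /= addn1 in hsum.
    step; rewrite natr1 -hsum; commit.
    by step; rewrite natr1; commit; split_state.
  + move=> hle; rewrite (negbTE hle) /= addn0 in hsum.
    step; commit.
    step; rewrite natr1; commit.
    by rewrite hsum; split_state.
- move=> ml [? ? ? ? ?]; destruct_state.
  eval_instr; read_regs; read_input; rewrite ltr_nat ltnn; split => //.
  by split_state; rewrite rank_countE -big_ord_prefix_all.
Qed.

Definition kth_step :=
  Seq count_rank
 (Seq (IfT TLe (Reg rM) (Reg rCount)
         (IfT TLt (Reg rKth) (Reg rWj) (Move (ToReg rKth) (Reg rWj)) skip)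
         skip)
      (Arith Add (ToReg rJ) (Reg rJ) (Const 1))).

Definition kth_block :=
  Seq (Move (ToReg rKth) (Const 0)) (Seq (Move (ToReg rJ) (Const 0))
      (WhileT TLt (Reg rJ) (Dir 0) kth_step)).

Definition kth_writes := rKth :: rJ :: count_rank_writes.

Definition kth_candidate n (w : 'I_n -> nat) mm (j : 'I_n) : nat :=
  if (mm <= rank_count w j)%N then w j else 0.

Lemma run_kth_largest n k (w : 'I_n -> nat) (i : 'I_n) m mm :
  state_ok k w i m -> m (reg rM) = mm%:R ->
  run m kth_block
    (fun m' => [/\ state_ok k w i m', m' (reg rKth) = (kth_largest w mm)%:R
                 & reg_frame kth_writes m m'])
    (5 * n * n + 12 * n + 4).
Proof.
move=> ? ?; apply: (@run_mono _ _ _ (2 + (n * (5 * n + 6 + (3 + 1)).+1).+1)); first nia.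
destruct_state; have ? : reg_frame kth_writes m m by [].
step; commit.
step; commit.
apply: (run_while (I := fun j m' => [/\ state_ok k w i m', m' (reg rM) = mm%:R, m' (reg rJ) = j%:R,
   m' (reg rKth) = (\max_(j' < n | (j' < j)%N) kth_candidate w mm j')%N%:R
   & reg_frame kth_writes m m'])).
- by split_state; rewrite ?big_pred0.
- move=> j mj hj [HS1 ? HJ1 ? HR1].
  split; first by destruct_state; eval_instr; read_regs; read_input; rewrite ltr_nat.
  have hmax := big_ord_prefixS maxn (kth_candidate w mm) hj.
  apply: run_seq; apply: (run_weaken _ (run_count_rank HS1 (j := Ordinal hj) HJ1)).
  move=> mc [? ? ? HR2].
  have sub : {subset count_rank_writes <= kth_writes} by move=> s hs; apply/mem_behead/mem_behead.
  pose proof (reg_frame_trans_sub sub HR1 HR2).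
  use_frame HR2; clear HR1; destruct_state.
  rewrite /kth_candidate /= in hmax.
  apply: run_seq; apply: run_if; eval_instr; read_regs; rewrite ler_nat => hc;
    rewrite ?hc ?(negbTE hc) /= ?maxn0 in hmax.
  + apply: run_if; eval_instr; read_regs; rewrite ltr_nat => hu.
    * step; rewrite (_ : w (Ordinal hj) = (\max_(j' < n | (j' < j.+1)%N) kth_candidate w mm j')%N);
        last by rewrite hmax; apply/esym/maxn_idPr/ltnW.
      commit.
      by step; rewrite natr1; commit; split_state.
    * step; commit.
      step; rewrite natr1; commit.
      by rewrite hmax (maxn_idPl _) 1?leqNgt //; split_state.
  + step; commit.
    step; rewrite natr1; commit.
    by rewrite hmax; split_state.
- move=> mj [? ? ? ? ?]; destruct_state.
  eval_instr; read_regs; read_input; rewrite ltr_nat ltnn; split => //.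
  have -> : kth_largest w mm = (\max_(j' < n | (j' < n)%N) kth_candidate w mm j')%N.
    by rewrite big_ord_prefix_all /kth_largest big_mkcond.
  by split_state.
Qed.

(* [T := T o e!] through the factorial table. *)
Definition fact_op (o : binop) (e : operand) (c : cmd) : cmd :=
  Seq (Arith Defs.Sub (ToReg rPtr) (Const (-30)) e)
 (Seq (Move (ToReg rTmp2) (Ind (reg rPtr)))
 (Seq (Arith o (ToReg rTmp) (Reg rTmp) (Reg rTmp2)) c)).

Definition term_step :=
  Seq (Arith Defs.Sub (ToReg rIdx) (Reg rM) (Const 1))
 (Seq (Arith Defs.Sub (ToReg rPtr) (Const (-30)) (Reg rIdx))
 (Seq (Move (ToReg rTmp) (Ind (reg rPtr)))
 (fact_op Div (Reg rX)
 (Seq (Arith Defs.Sub (ToReg rIdx) (Reg rIdx) (Reg rX))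
 (fact_op Div (Reg rIdx)
 (fact_op Mul (Reg rNsubM)
 (fact_op Div (Reg rY)
 (Seq (Arith Defs.Sub (ToReg rIdx) (Reg rNsubM) (Reg rY))
 (fact_op Div (Reg rIdx)
 (Seq (Arith Add (ToReg rIdx) (Reg rX) (Reg rY))
 (fact_op Mul (Reg rIdx)
 (Seq (Arith Defs.Sub (ToReg rIdx) (Dir 0) (Reg rIdx))
 (Seq (Arith Defs.Sub (ToReg rIdx) (Reg rIdx) (Const 1))
 (fact_op Mul (Reg rIdx)
 (fact_op Div (Dir 0)
 (Seq (Arith Add (ToReg rLayer) (Reg rLayer) (Reg rTmp))
      (Arith Add (ToReg rY) (Reg rY) (Const 1)))))))))))))))))).

Definition layer_row_writes := [:: rLayer; rY; rPtr; rTmp; rTmp2; rIdx].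

Lemma natr_subn1 (a : nat) : (1 <= a)%N -> a%:R - 1 = (a - 1)%:R :> rat.
Proof. by move=> h; rewrite natrB. Qed.

Lemma run_term_step n k (w : 'I_n -> nat) (i : 'I_n) m mm x y h :
  (1 <= mm <= n)%N -> (x < mm)%N -> (y <= n - mm)%N ->
  state_ok k w i m -> m (reg rM) = mm%:R -> m (reg rX) = x%:R ->
  m (reg rNsubM) = (n - mm)%:R -> m (reg rY) = y%:R -> m (reg rLayer) = h ->
  run m term_step
    (fun m' => [/\ state_ok k w i m', m' (reg rY) = y.+1%:R,
                  m' (reg rLayer) = h + layer_term n mm x y & reg_frame layer_row_writes m m'])
    34.
Proof.
move=> /andP [h1 hmn] hx hy ? ? ? ? ? ?; destruct_state.
have ? : reg_frame layer_row_writes m m by [].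
step; rewrite (natr_subn1 h1); commit.
do 2 (step; commit).
do 3 (step; commit).
step; rewrite -natrB; last by lia.
commit.
do 9 (step; commit).
step; rewrite -natrB; last by lia.
commit.
do 3 (step; commit).
step; rewrite -natrD; commit.
do 3 (step; commit).
step; rewrite -natrB; last by lia.
commit.
step; rewrite natr_subn1; last by lia.
commit.
do 6 (step; commit).
step; commit.
step; rewrite natr1; commit.
by split_state.
Qed.

Lemma run_layer_row n k (w : 'I_n -> nat) (i : 'I_n) m mm x h :
  (1 <= mm <= n)%N -> (x < mm)%N ->
  state_ok k w i m -> m (reg rM) = mm%:R -> m (reg rX) = x%:R ->
  m (reg rNsubM) = (n - mm)%:R -> m (reg rY) = 0 -> m (reg rLayer) = h ->
  run m (WhileT TLe (Reg rY) (Reg rNsubM) term_step)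
    (fun m' => [/\ state_ok k w i m',
                  m' (reg rLayer) = h + \sum_(y < n - mm + 1) layer_term n mm x y
                 & reg_frame layer_row_writes m m'])
    ((n - mm + 1) * 35).+1.
Proof.
move=> hmm hx ? ? ? ? ? ?.
apply: (run_while (I := fun y m' => [/\ state_ok k w i m', m' (reg rY) = y%:R,
          m' (reg rLayer) = h + \sum_(y' < y) layer_term n mm x y'
        & reg_frame layer_row_writes m m'])).
- by split; rewrite ?big_ord0 ?addr0.
- move=> y my hy [HS1 HY1 HH1 HR1]; use_frame HR1.
  split; first by eval_instr; read_regs; rewrite ler_nat; lia.
  apply: run_weaken (run_term_step hmm hx _ HS1 _ _ _ HY1 HH1) => //; last by lia.
  move=> m' [? ? HH2 HR2]; split => //.
    by rewrite HH2 big_ord_recr addrA.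
  exact: reg_frame_trans HR1 HR2.
- move=> my [? ? ? HR1]; use_frame HR1; split => //.
  by eval_instr; read_regs; rewrite ler_nat; apply/negbTE; rewrite -ltnNge; lia.
Qed.

Definition layer_step :=
  Seq (IfT TLt (Reg rX) (Dir 1)
         (Seq (Move (ToReg rY) (Const 0)) (WhileT TLe (Reg rY) (Reg rNsubM) term_step))
         skip)
      (Arith Add (ToReg rX) (Reg rX) (Const 1)).

Definition layer_block :=
  Seq (Move (ToReg rLayer) (Const 0)) (Seq (Move (ToReg rX) (Const 0))
 (Seq (Arith Defs.Sub (ToReg rNsubM) (Dir 0) (Reg rM)) (WhileT TLt (Reg rX) (Reg rM) layer_step))).

Definition layer_step_writes := rX :: layer_row_writes.
Definition layer_writes := rNsubM :: layer_step_writes.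

Lemma run_layer_weight n k (w : 'I_n -> nat) (i : 'I_n) m mm :
  (1 <= mm <= n)%N -> state_ok k w i m -> m (reg rM) = mm%:R ->
  run m layer_block
    (fun m' => [/\ state_ok k w i m', m' (reg rLayer) = layer_weight n k mm
                 & reg_frame layer_writes m m'])
    (36 * n * n + 6 * n + 4).
Proof.
move=> hmm ? ?; case/andP: (hmm) => h1 hmn.
apply: (@run_mono _ _ _ (3 + (mm * ((1 + ((n - mm + 1) * 35).+1).+1 + 1).+1).+1)); first nia.
destruct_state; have ? : reg_frame layer_writes m m by [].
step; commit. step; commit. step; rewrite -natrB //; commit.
name_memory m0; have ? : reg_frame layer_step_writes m0 m0 by [].
match goal with H : reg_frame _ m m0 |- _ => rename H into HRm end.
apply: (@run_weaken _ _ (fun m' => [/\ state_ok k w i m', m' (reg rLayer) = layer_weight n k mm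
                                       & reg_frame layer_step_writes m0 m'])).
  move=> m' [? ? HR']; split => //.
  by apply: reg_frame_trans_sub HRm HR' => s hs; exact: mem_behead.
apply: (run_while (I := fun x m' => [/\ state_ok k w i m', m' (reg rX) = x%:R,
   m' (reg rLayer) =
     \sum_(x' < x) (if (x' < k)%N then \sum_(y < n - mm + 1) layer_term n mm x' y else 0)
   & reg_frame layer_step_writes m0 m'])).
- by split_state; rewrite big_ord0.
- move=> x mx hx [? ? ? HR1]; use_frame HR1.
  split; first by destruct_state; eval_instr; read_regs; rewrite ltr_nat.
  rewrite big_ord_recr /=.
  apply: run_seq; apply: run_if; destruct_state; eval_instr; read_regs; read_input;
    rewrite ltr_nat => hk.
  + rewrite hk; step; commit; pack_state.
    apply: (run_weaken _ (run_layer_row hmm hx _ _ _ _ _ _)); try eassumption.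
    move=> m' [? ? HR2]; use_frame HR2.
    match goal with H : reg_frame layer_step_writes m0 _ |- _ =>
      pose proof (reg_frame_trans_sub (fun s hs => mem_behead hs) H HR2) end.
    destruct_state; step; rewrite natr1; commit.
    by split_state.
  + rewrite (negbTE hk) addr0.
    step; commit. step; rewrite natr1; commit.
    by split_state.
- move=> mx [? ? ? HR1]; use_frame HR1; split => //.
  by destruct_state; eval_instr; read_regs; rewrite ltr_nat ltnn.
Qed.

Definition min_block :=
  IfT TLe (Reg rWi) (Reg rKth) (Move (ToReg rMin) (Reg rWi)) (Move (ToReg rMin) (Reg rKth)).

Lemma run_min_block n k (w : 'I_n -> nat) (i : 'I_n) m u :
  state_ok k w i m -> m (reg rKth) = u%:R ->
  run m min_block
    (fun m' => [/\ state_ok k w i m', m' (reg rMin) = (minn (w i) u)%:R & reg_frame [:: rMin] m m'])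
    2.
Proof.
move=> ? ?; destruct_state; have ? : reg_frame [:: rMin] m m by [].
apply: run_if; eval_instr; read_regs; rewrite ler_nat => h.
  by step; rewrite (minn_idPl h); commit; split_state.
move: h; rewrite -ltnNge => /ltnW h.
by step; rewrite (minn_idPr h); commit; split_state.
Qed.

Definition update_result :=
  Seq (Arith Defs.Sub (ToReg rTmp) (Reg rLayer) (Reg rLayerPrev))
 (Seq (Arith Mul (ToReg rTmp) (Reg rTmp) (Reg rMin))
 (Seq (Arith Add (ToReg rResult) (Reg rResult) (Reg rTmp))
 (Seq (Move (ToReg rLayerPrev) (Reg rLayer))
      (Arith Add (ToReg rM) (Reg rM) (Const 1))))).

Definition main_step := Seq kth_block (Seq min_block (Seq layer_block update_result)).

Definition main_loop :=
  Seq (Move (ToReg rResult) (Const 0)) (Seq (Move (ToReg rLayerPrev) (Const 0))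
 (Seq (Move (ToReg rM) (Const 1)) (WhileT TLe (Reg rM) (Dir 0) main_step))).

Definition partial_formula n k (w : 'I_n -> nat) (i : 'I_n) (j : nat) : rat :=
  \sum_(m < j) (layer_weight n k m.+1 - layer_weight n k m) * (minn (w i) (kth_largest w m.+1))%:R.

Lemma run_main_loop n k (w : 'I_n -> nat) (i : 'I_n) m :
  state_ok k w i m ->
  run m main_loop (fun m' => m' (reg rResult) = shapley_topk_formula k w i)
    (75 * n * n * n + 4).
Proof.
move=> ?; destruct_state.
apply: (@run_mono _ _ _
  (3 + (n * (5 * n * n + 12 * n + 4 + (2 + (36 * n * n + 6 * n + 4 + 5))).+1).+1)).
  have [->|n_gt0] := posnP n => //.
  by have := leq_pmulr n n_gt0; have := leq_pmulr (n * n) n_gt0; nia.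
step; commit. step; commit. step; commit.
apply: (run_while (I := fun j m' => [/\ state_ok k w i m', m' (reg rM) = j.+1%:R,
   m' (reg rResult) = partial_formula k w i j & m' (reg rLayerPrev) = layer_weight n k j])).
- by split_state; rewrite /partial_formula /layer_weight !big_ord0.
- move=> j mj hj [HS1 HM1 ? ?].
  split; first by destruct_state; eval_instr; read_regs; read_input; rewrite ler_nat.
  apply: run_seq; apply: (run_weaken _ (run_kth_largest HS1 HM1)) => mu [HS2 HU HRu].
  use_frame HRu.
  apply: run_seq; apply: (run_weaken _ (run_min_block HS2 HU)) => mg [HS3 ? HRg].
  use_frame HRg.
  have hmm : (1 <= j.+1 <= n)%N by [].
  apply: run_seq; apply: (run_weaken _ (run_layer_weight hmm HS3 _)); first last.
    by use_frame HRg; assumption.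
  move=> mh [? ? HRh]; use_frame HRh; destruct_state.
  do 3 (step; commit). step; commit.
  step; rewrite natr1; commit.
  split_state.
  by rewrite /partial_formula big_ord_recr.
- move=> mj [? ? ? ?]; destruct_state; eval_instr; read_regs; read_input.
  by rewrite ler_nat ltnn.
Qed.

Definition shapley_topk_program :=
  Seq load_wi (Seq fill_facts (Seq main_loop (Move (DDir 0) (Reg rResult)))).

Lemma run_shapley_topk_program n k (w : 'I_n -> nat) (i : 'I_n) :
  run (init_mem k w i) shapley_topk_program (fun m => m 0 = shapley_topk_formula k w i)
    (100 * n ^ 3 + 100).
Proof.
apply: (@run_mono _ _ _ (2 + ((7 * n + 4) + ((75 * n * n * n + 4) + 1)))).
  rewrite (_ : n ^ 3 = n * n * n)%N; last by rewrite !expnS expn0 muln1 mulnA.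
  have [->|n_gt0] := posnP n => //.
  by have := leq_pmulr n n_gt0; have := leq_pmulr (n * n) n_gt0; nia.
apply: run_seq; apply: run_weaken (run_load_wi k w i) => m1 [HI HW].
apply: run_seq; apply: run_weaken (run_fill_facts HI HW) => m2 HS.
apply: run_seq; apply: run_weaken (run_main_loop HS) => m3 HR.
by apply: run_move_end; eval_instr; rewrite upd_same.
Qed.

Theorem corollary4 :
  exists (P : cmd) (C : nat),
    forall (n k : nat) (w : 'I_n -> nat) (i : 'I_n),
      exists (t : nat) (m' : memory),
        [/\ exec (init_mem k w i) P t m',
            m' 0 = shapley (fun S => (topk_game k w S)%:R) i
          & (t <= C * n ^ 3 + C)%N].
Proof.
exists shapley_topk_program, 100%N => n k w i.
have [t [m' [? ? ?]]] := run_shapley_topk_program k w i.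
by exists t, m'; rewrite shapley_topk_formulaE.
Qed.
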